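(* Let $n\geq p\geq 1$ and $k\geq 2$ be integers. Let $u$ be a length-$p$ word over $\Sigma_k$, let $b[1..p]$ be the border indicator of $u$ and let $a[1..p]$ be the unbordered prefix indicator of $u$. Then \[B_k(u,n) = \begin{cases} \sum\limits_{i=1}^{n-p}a[i]k^{n-p-i} + \sum\limits_{i=n-p+1}^{\lfloor n/2\rfloor} a[i]\,b[i-(n-p)], & \text{if } n \leq 2p;\\[2mm] \sum\limits_{i=1}^p a[i] k^{n-p-i} + \sum\limits_{i=p+1}^{\lfloor n/2\rfloor} \bigl(k^{i-p} - B_k(u,i)\bigr)k^{n-2i}, & \text{otherwise.} \end{cases}\]
   Context: $\Sigma_k=\{1,2,\ldots,k\}$. A border of a word $w$ is a word that is both a non-empty proper prefix and a non-empty proper suffix of $w$; $w$ is bordered if it has a border and unbordered otherwise. For a word $u$ and integer $m\ge |u|$, $B_k(u,m)$ denotes the number of length-$m$ bordered words over $\Sigma_k$ having $u$ as a prefix. For a word $u=u_1\cdots u_p$: its unbordered prefix indicator is the array $a[1..p]$ with $a[i]=1$ if $u_1\cdots u_i$ is unbordered and $a[i]=0$ otherwise; its border indicator is the array $b[1..p]$ with $b[i]=1$ if $u$ has a border of length $i$ and $b[i]=0$ otherwise. *)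

From mathcomp Require Import all_boot all_algebra.
Set Implicit Arguments. Unset Strict Implicit. Unset Printing Implicit Defensive.

(* Alphabet Sigma_k = {1..k} is represented by 'I_k = {0..k-1} (a relabelling). *)

Definition has_border {T : eqType} (w : seq T) (i : nat) : bool :=
  (0 < i < size w) && (take i w == drop (size w - i) w).

Definition bordered {T : eqType} (w : seq T) : bool :=
  [exists i : 'I_(size w), has_border w i].

Definition Bk (k : nat) (u : seq 'I_k) (m : nat) : nat :=
  #|[set w : m.-tuple 'I_k | bordered (val w) && (take (size u) (val w) == u)]|.

(* unbordered prefix indicator a[i] (1-based) *)
Definition ind_a {T : eqType} (u : seq T) (i : nat) : nat :=
  ~~ bordered (take i u).

Definition ind_b {T : eqType} (u : seq T) (i : nat) : nat :=
  has_border u i.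

From mathcomp Require Import all_boot all_algebra zify.
Set Implicit Arguments. Unset Strict Implicit. Unset Printing Implicit Defensive.

(* The shortest border of a bordered word w is unbordered, it is the only
   unbordered border of w, and its length i satisfies 2 i <= |w|; so B_k(u,n)
   is the sum over 1 <= i <= n/2 of the number of length-n words with prefix u
   whose shortest border has length i.  Write a length-n word as u y.  When
   i <= min(p, n - p) the border is u[1..i], which must be unbordered, and the
   remaining n - p - i letters of y are free.  When n - p < i <= p the border
   overlaps u, so y is determined by u; the count is 1 exactly when u[1..i]
   is unbordered and u has a border of length i - (n - p).  When i > p the word is x z x with x an unbordered word
   of length i with prefix u, of which there are k^(i-p) - B_k(u,i), and z free
   of length n - 2i. *)

Section Words.
Variable T : finType.

Fixpoint words n : seq (seq T) :=
  if n is n'.+1 then [seq x :: w | x <- enum T, w <- words n'] else [:: [::]].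

Definition nwords n (P : seq T -> bool) : nat := \sum_(w <- words n) P w.

Lemma mem_words n w : (w \in words n) = (size w == n).
Proof.
elim: n w => [|n IHn] [|x w] //=.
- by apply/allpairsP => -[[a b] /= [_ _]].
- apply/allpairsP/idP => [[[a b] /= [_]]|sz_w].
  + by rewrite IHn => /eqP <- [_ ->].
  + by exists (x, w); rewrite mem_enum IHn.
Qed.

Lemma words_uniq n : uniq (words n).
Proof.
elim: n => [|n IHn] //=; apply: allpairs_uniq => //; first exact: enum_uniq.
by move=> [a b] [c d] _ _ /= [-> ->].
Qed.

Lemma size_words n : size (words n) = #|T| ^ n.
Proof. by elim: n => [|n IHn] //=; rewrite size_allpairs IHn -cardE expnS. Qed.

Lemma eq_nwords n (P Q : seq T -> bool) :
  (forall w, size w = n -> P w = Q w) -> nwords n P = nwords n Q.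
Proof.
by move=> eqPQ; apply: eq_big_seq => w; rewrite mem_words => /eqP/eqPQ->.
Qed.

Lemma nwords_const n (b : bool) : nwords n (fun=> b) = b * #|T| ^ n.
Proof. by rewrite /nwords big_const_seq count_predT size_words iter_addn_0 mulnC. Qed.

Lemma nwords_cat m n (P : seq T -> bool) :
  nwords (m + n) P = \sum_(x <- words m) nwords n (fun y => P (x ++ y)).
Proof.
elim: m P => [|m IHm] P; first by rewrite /= big_seq1.
rewrite addSn /nwords /= !big_allpairs_dep /=; apply: eq_bigr => x _.
exact: (IHm (fun w => P (x :: w))).
Qed.

Lemma nwords_pred1 n (v : seq T) (Q : seq T -> bool) :
  size v = n -> nwords n (fun y => Q y && (y == v)) = Q v.
Proof.
move=> sz_v; rewrite /nwords (bigD1_seq v) ?words_uniq ?mem_words ?sz_v //=.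
by rewrite eqxx andbT big1 ?addn0 // => y /negbTE->; rewrite andbF.
Qed.

Lemma nwords_prefix p m (v : seq T) (P : seq T -> bool) : size v = p ->
  nwords (p + m) (fun w => P w && prefix v w) = nwords m (fun y => P (v ++ y)).
Proof.
move=> sz_v; rewrite nwords_cat /nwords exchange_big /=; apply: eq_bigr => y _.
rewrite -(nwords_pred1 (fun x => P (x ++ y)) sz_v).
by apply: eq_nwords => x sz_x; rewrite prefixE sz_v take_size_cat.
Qed.

Lemma nwords_suffix m q (v : seq T) (P : seq T -> bool) : size v = q ->
  nwords (m + q) (fun w => P w && (drop m w == v)) = nwords m (fun x => P (x ++ v)).
Proof.
move=> sz_v; rewrite nwords_cat; apply: eq_big_seq => x.
rewrite mem_words => /eqP sz_x.
rewrite -(nwords_pred1 (fun y => P (x ++ y)) sz_v).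
by apply: eq_nwords => y _; rewrite drop_size_cat.
Qed.

Lemma nwords_card n (P : seq T -> bool) :
  nwords n P = #|[set w : n.-tuple T | P w]|.
Proof.
rewrite cardsE -sum1_card big_mkcond /=.
have -> : \sum_(w : n.-tuple T) (if P w then 1 else 0) =
          \sum_(s <- map val (enum {: n.-tuple T})) P s.
  by rewrite big_map big_enum; apply: eq_bigr => w _; case: (P w).
rewrite /nwords; apply: perm_big; apply: uniq_perm => [||w].
- exact: words_uniq.
- by rewrite map_inj_uniq ?enum_uniq //; apply: val_inj.
rewrite mem_words; apply/eqP/mapP => [sz_w|[t _ ->]]; last by rewrite size_tuple.
by exists (Tuple (introT eqP sz_w)); rewrite ?mem_enum.
Qed.

End Words.

Section Borders.
Variable T : eqType.
Implicit Types (w x y : seq T) (i j : nat).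

Lemma has_border_bordered w i : has_border w i -> bordered w.
Proof.
move=> bi; have /andP[/andP[_ lt_iw] _] := bi.
by apply/existsP; exists (Ordinal lt_iw).
Qed.

Lemma has_border_trans w i j :
  has_border w i -> has_border (take i w) j -> has_border w j.
Proof.
move=> /andP[/andP[i_gt0 lt_iw] /eqP bi].
rewrite /has_border size_takel ?(ltnW lt_iw) // => /andP[/andP[j_gt0 lt_ji] /eqP bj].
rewrite j_gt0 (ltn_trans lt_ji lt_iw) /=; apply/eqP.
rewrite -(take_takel _ (ltnW lt_ji)) bj bi drop_drop; congr drop; lia.
Qed.

Lemma has_border_take w i j :
  has_border w i -> has_border w j -> i < j -> has_border (take j w) i.
Proof.
move=> /andP[/andP[i_gt0 _] /eqP bi] /andP[/andP[_ lt_jw] /eqP bj] lt_ij.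
rewrite /has_border size_takel ?(ltnW lt_jw) // i_gt0 lt_ij /=; apply/eqP.
rewrite take_takel ?(ltnW lt_ij) // bi bj drop_drop; congr drop; lia.
Qed.

(* For bordered w, the unique i with [unbordered_border w i] is the length of
   its shortest border. *)
Definition unbordered_border w i := has_border w i && ~~ bordered (take i w).

Lemma unbordered_border_uniq w i j :
  unbordered_border w i -> unbordered_border w j -> i = j.
Proof.
case/andP=> bi ui /andP[bj uj]; case: (ltngtP i j) => // [lt_ij|lt_ji].
- by rewrite (has_border_bordered (has_border_take bi bj lt_ij)) in uj.
- by rewrite (has_border_bordered (has_border_take bj bi lt_ji)) in ui.
Qed.

Lemma bordered_unbordered_border w :
  bordered w -> exists i, unbordered_border w i.
Proof.
case/existsP=> i0 bi0; have ex_b : exists i, has_border w i by exists i0.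
case: (ex_minnP ex_b) => i bi min_i; exists i; rewrite /unbordered_border bi /=.
apply/negP=> /existsP[j bj]; have := min_i _ (has_border_trans bi bj).
by have := ltn_ord j; have := size_take_min i w; lia.
Qed.

Lemma unbordered_border_half w i : unbordered_border w i -> 2 * i <= size w.
Proof.
(* Two occurrences of a border of length i > |w|/2 overlap, so that border has
   itself a border of length 2 i - |w|. *)
case/andP=> bi; apply: contraR; rewrite -ltnNge => lt_w2i.
have /andP[/andP[i_gt0 lt_iw] /eqP ei] := bi.
apply: (@has_border_bordered _ (2 * i - size w)).
rewrite /has_border size_takel ?(ltnW lt_iw) //.
apply/andP; split; first by apply/andP; split; lia.
apply/eqP; rewrite {1}ei take_drop.
have -> : 2 * i - size w + (size w - i) = i by lia.
congr drop; lia.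
Qed.

Lemma bordered_sum_unbordered_border w :
  bordered w = \sum_(1 <= i < (size w)./2.+1) unbordered_border w i :> nat.
Proof.
case bw: (bordered w); last first.
  rewrite big1 // => i _; apply/eqP; rewrite eqb0.
  by apply: contraFN bw => /andP[/has_border_bordered].
have [i0 ub0] := bordered_unbordered_border bw.
have i0_gt0 : 0 < i0 by case/andP: ub0 => /andP[/andP[]].
rewrite (bigD1_seq i0) ?iota_uniq //=; last first.
  by rewrite mem_index_iota i0_gt0 ltnS geq_half_double -mul2n unbordered_border_half.
rewrite ub0 big1 // => i ne_i_i0; apply/eqP; rewrite eqb0.
by apply: contra ne_i_i0 => ub; rewrite (unbordered_border_uniq ub ub0).
Qed.

Lemma has_border_cat_disjoint x y i :
  0 < i -> i <= size x -> i <= size y ->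
  has_border (x ++ y) i = (take i x == drop (size y - i) y).
Proof.
move=> i_gt0 le_ix le_iy; rewrite /has_border size_cat takel_cat // drop_cat.
rewrite ifN; last by rewrite -leqNgt; lia.
have -> : size x + size y - i - size x = size y - i by lia.
by have -> : 0 < i < size x + size y by apply/andP; split; lia.
Qed.

Lemma has_border_cat_overlap x y i :
  size y < i -> 2 * i <= size x + size y ->
  has_border (x ++ y) i =
    has_border x (i - size y) && (drop (i - size y) (take i x) == y).
Proof.
move=> lt_yi le_2i; have le_ix : i <= size x by lia.
rewrite /has_border size_cat takel_cat // drop_cat ifT; last by lia.
rewrite -{1}[take i x](cat_take_drop (i - size y)) take_takel ?leq_subr //.
rewrite eqseq_cat; last by rewrite size_takel ?size_drop; lia.
have -> : size x + size y - i = size x - (i - size y) by lia.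
have -> : 0 < i < size x + size y by apply/andP; split; lia.
by have -> : 0 < i - size y < size x by apply/andP; split; lia.
Qed.

End Borders.

Section Counting.
Variables (T : finType) (p : nat) (u : seq T).
Hypothesis sz_u : size u = p.

Lemma nwords_bordered_sum n :
  nwords n (fun w => bordered w && prefix u w) =
  \sum_(1 <= i < n./2.+1) nwords n (fun w => unbordered_border w i && prefix u w).
Proof.
rewrite /nwords exchange_big; apply: eq_big_seq => w; rewrite mem_words => /eqP sz_w.
rewrite -mulnb bordered_sum_unbordered_border sz_w big_distrl /=.
by apply: eq_bigr => i _; rewrite mulnb.
Qed.

Lemma nwords_short_border m i :
  0 < i -> i <= p -> i <= m ->
  nwords (p + m) (fun w => unbordered_border w i && prefix u w) =
  ind_a u i * #|T| ^ (m - i).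
Proof.
move=> i_gt0 le_ip le_im.
have sz_ui : size (take i u) = i by rewrite size_takel ?sz_u.
rewrite -{1}(subnK le_im) nwords_prefix // (eq_nwords (Q := fun y =>
  ~~ bordered (take i u) && (drop (m - i) y == take i u))) => [|y sz_y].
  by rewrite nwords_suffix // nwords_const.
rewrite /unbordered_border takel_cat ?sz_u //.
rewrite has_border_cat_disjoint ?sz_u ?sz_y ?addnK //.
  by rewrite andbC eq_sym.
exact: leq_addl.
Qed.

Lemma nwords_overlap_border m i :
  m < i -> 2 * i <= p + m ->
  nwords (p + m) (fun w => unbordered_border w i && prefix u w) =
  ind_a u i * ind_b u (i - m).
Proof.
move=> lt_mi le_2i; have le_ip : i <= p by lia.
set v := drop (i - m) (take i u).
have sz_v : size v = m by rewrite size_drop size_takel ?sz_u //; lia.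
rewrite nwords_prefix // (eq_nwords (Q := fun y =>
  (has_border u (i - m) && ~~ bordered (take i u)) && (y == v))) => [|y sz_y].
  by rewrite nwords_pred1 // mulnb andbC.
rewrite /unbordered_border takel_cat ?has_border_cat_overlap ?sz_u ?sz_y //.
by rewrite andbAC eq_sym.
Qed.

Lemma nwords_long_border n i :
  0 < i -> p <= i -> 2 * i <= n ->
  nwords n (fun w => unbordered_border w i && prefix u w) =
  nwords i (fun x => ~~ bordered x && prefix u x) * #|T| ^ (n - 2 * i).
Proof.
move=> i_gt0 le_pi le_2i_n; have def_n : n = i + (n - 2 * i + i) by lia.
rewrite {1}def_n nwords_cat [nwords i _]/nwords big_distrl /=.
apply: eq_big_seq => x; rewrite mem_words => /eqP sz_x.
rewrite (eq_nwords (Q := fun y =>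
  (~~ bordered x && prefix u x) && (drop (n - 2 * i) y == x))) => [|y sz_y].
  by rewrite nwords_suffix // nwords_const.
rewrite /unbordered_border take_size_cat // !prefixE takel_cat ?sz_u ?sz_x //.
rewrite has_border_cat_disjoint ?sz_x ?sz_y ?addnK //.
  by rewrite -{1}sz_x take_size [x == _]eq_sym -andbA andbC.
exact: leq_addl.
Qed.

Lemma nwords_prefixC m (P : seq T -> bool) : p <= m ->
  nwords m (fun w => ~~ P w && prefix u w) + nwords m (fun w => P w && prefix u w) =
  #|T| ^ (m - p).
Proof.
move=> le_pm; have := nwords_prefix (m - p) (fun=> true) sz_u.
rewrite subnKC // nwords_const mul1n => <-.
by rewrite /nwords -big_split; apply: eq_bigr => w _; case: (P w); rewrite /= ?addn0.
Qed.

End Counting.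

Lemma Bk_nwords k (u : seq 'I_k) m :
  Bk u m = nwords m (fun w => bordered w && prefix u w).
Proof. by rewrite /Bk nwords_card; apply: eq_card => w; rewrite !inE prefixE. Qed.

Import GRing.Theory.
Local Open Scope ring_scope.

Theorem theorem5 (k n p : nat) (u : seq 'I_k) :
  (2 <= k)%N -> (1 <= p)%N -> (p <= n)%N -> size u = p ->
  (Bk u n)%:Z =
  if (n <= 2 * p)%N then
    \sum_(1 <= i < (n - p).+1) ((ind_a u i) * k ^ (n - p - i))%:Z
    + \sum_(n - p + 1 <= i < (n./2).+1) ((ind_a u i) * (ind_b u (i - (n - p))))%:Z
  else
    \sum_(1 <= i < p.+1) ((ind_a u i) * k ^ (n - p - i))%:Z
    + \sum_(p + 1 <= i < (n./2).+1)
        ((k ^ (i - p))%:Z - (Bk u i)%:Z) * (k ^ (n - 2 * i))%:Z.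
Proof.
move=> _ _ le_pn sz_u.
have [m ->] : exists m, n = (p + m)%N by exists (n - p)%N; rewrite subnKC.
rewrite addKn Bk_nwords nwords_bordered_sum (big_morph Posz PoszD (erefl _)).
have le_half i : (i <= (p + m)./2)%N = (2 * i <= p + m)%N.
  by rewrite geq_half_double -mul2n.
case: ifP => [le_m_p | /negbT lt_2p_n].
- rewrite (@big_cat_nat _ _ _ m.+1) ?le_half /=; [|lia|lia].
  congr (_ + _); rewrite ?addn1; apply: eq_big_nat => i /andP[lo hi].
    by rewrite (nwords_short_border sz_u) ?card_ord //; lia.
  by rewrite (nwords_overlap_border sz_u) //; move: hi; rewrite ltnS le_half; lia.
- rewrite (@big_cat_nat _ _ _ p.+1) ?le_half /=; [|lia|lia].
  congr (_ + _); rewrite ?addn1; apply: eq_big_nat => i /andP[lo hi].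
    by rewrite (nwords_short_border sz_u) ?card_ord //; lia.
  have le_2i : (2 * i <= p + m)%N by move: hi; rewrite ltnS le_half.
  rewrite (nwords_long_border sz_u) ?card_ord ?(ltnW lo) ?(leq_ltn_trans _ lo) //.
  have := nwords_prefixC sz_u bordered (ltnW lo); rewrite card_ord -Bk_nwords => <-.
  by rewrite PoszD addrK PoszM.
Qed.
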